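(* Let $g:[0,\infty)\to\mathbb{R}$ satisfy $g(1)=0$ and $g(1/2)=1/2$, and suppose that the function $\hat H(a_1,\ldots,a_n)=g(a_1)+\cdots+g(a_n)-g(a_1+\cdots+a_n)$, defined on finite sequences of nonnegative reals with positive sum, is homogeneous (i.e. $\hat H(ca)=c\hat H(a)$ for all $c>0$) and continuous (for each $n$, as a function of $(a_1,\ldots,a_n)$). Then $g(a)=a\log_2(1/a)$ for every rational $a>0$.
   Context: All logarithms are to base $2$. *)

From Stdlib Require Import Reals.
Open Scope R_scope.

Fixpoint psum (a : nat -> R) (n : nat) : R :=
  match n with
  | O => 0
  | S m => psum a m + a m
  end.

Definition log2 (x : R) : R := ln x / ln 2.

Definition in_dom (n : nat) (a : nat -> R) : Prop :=
  (forall i, (i < n)%nat -> 0 <= a i) /\ 0 < psum a n.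

(* H-hat(a_1,...,a_n) = g(a_1)+...+g(a_n) - g(a_1+...+a_n),
   the tuple being (a 0, ..., a (n-1)). *)
Definition Hhat (g : R -> R) (n : nat) (a : nat -> R) : R :=
  psum (fun i => g (a i)) n - g (psum a n).

From Stdlib Require Import Reals Lra Lia.
Open Scope R_scope.

(* Homogeneity of H-hat on pairs gives the functional equation
     g (c a) + g (c b) - g (c a + c b) = c (g a + g b - g (a + b)),
   from which g 0 = 0 and g (c n) = c g(n) + n g(c) for integers n; so g on the
   rationals p/q is determined by g on the integers.  For the integers we study
   the defect  r n = g(n)/n + log2 n, which we must show vanishes:
   - r is completely additive (from the scaling identity) and r 2 = 0 (from
     g(1/2) = 1/2);
   - continuity of H-hat at the pair (1, 0), evaluated at (1, 1/j), shows that
     g (j+1) - g j = o(j), and (j+1) log2 (j+1) - j log2 j = o(j) since ln is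
     sublinear; hence (j+1) r(j+1) - j r(j) = o(j).
   An Erdos-type argument then shows that such an additive r is identically 0:
   halving an argument changes |r| by at most eta, so |r n| = O(1) + eta log2 n,
   which is incompatible with r (p^k) = k r p unless r p = 0.
   The file proves this arithmetic lemma first, then the logarithm estimates,
   then the functional-equation consequences, and finally the theorem. *)

Definition small_increments (f : nat -> R) : Prop :=
  forall eta, 0 < eta -> exists N : nat, forall j, (N <= j)%nat -> (1 <= j)%nat ->
    Rabs (f (S j) - f j) <= eta * INR j.

Lemma small_increments_plus (f h : nat -> R) :
  small_increments f -> small_increments h ->
  small_increments (fun n => f n + h n).
Proof.
  intros Hf Hh eta Heta.
  destruct (Hf (eta / 2) ltac:(lra)) as [Nf HNf].
  destruct (Hh (eta / 2) ltac:(lra)) as [Nh HNh].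
  exists (Nf + Nh)%nat; intros j Hj Hj1.
  specialize (HNf j ltac:(lia) Hj1); specialize (HNh j ltac:(lia) Hj1).
  replace (f (S j) + h (S j) - (f j + h j)) with ((f (S j) - f j) + (h (S j) - h j)) by ring.
  eapply Rle_trans; [apply Rabs_triang | lra].
Qed.

Lemma small_increments_ext (f h : nat -> R) :
  (forall n, (1 <= n)%nat -> f n = h n) -> small_increments f -> small_increments h.
Proof.
  intros Heq Hf eta Heta.
  destruct (Hf eta Heta) as [N HN]; exists N; intros j Hj Hj1.
  rewrite <- !Heq by lia; auto.
Qed.

Lemma finite_bound (r : nat -> R) (K : nat) :
  exists M, forall n, (n <= K)%nat -> Rabs (r n) <= M.
Proof.
  induction K as [|K [M HM]].
  - exists (Rabs (r 0%nat)); intros n Hn; replace n with 0%nat by lia; lra.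
  - exists (Rmax M (Rabs (r (S K)))); intros n Hn.
    destruct (Nat.eq_dec n (S K)) as [->|Hne]; [apply Rmax_r|].
    eapply Rle_trans; [apply HM; lia | apply Rmax_l].
Qed.

Lemma weighted_step (x y J eta : R) : 0 < J -> 0 <= eta ->
  Rabs ((J + 1) * x - J * y) <= eta * J -> Rabs x <= Rabs y + eta.
Proof.
  intros HJ Heta H.
  assert (Htri : Rabs ((J + 1) * x) <= Rabs ((J + 1) * x - J * y) + Rabs (J * y)).
  { replace ((J + 1) * x) with (((J + 1) * x - J * y) + J * y) at 1 by ring.
    apply Rabs_triang. }
  rewrite !Rabs_mult, (Rabs_right (J + 1)), (Rabs_right J) in Htri by lra.
  pose proof (Rabs_pos y).
  assert ((J + 1) * Rabs x <= (J + 1) * (Rabs y + eta)) by nra.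
  apply Rmult_le_reg_l in H1; lra.
Qed.

(* A completely additive function on the positive integers with r 2 = 0
   whose weighted increments (n+1) r(n+1) - n r(n) are o(n) vanishes
   (a variant of Erdos' characterisation of the logarithm). *)
Section AdditiveVanishing.

Variable r : nat -> R.
Hypothesis r_mul : forall m n, (1 <= m)%nat -> (1 <= n)%nat -> r (m * n)%nat = r m + r n.
Hypothesis r_two : r 2%nat = 0.

Lemma r_pow (p k : nat) : (1 <= p)%nat -> r (p ^ k)%nat = INR k * r p.
Proof.
  intros Hp; induction k as [|k IH].
  - pose proof (r_mul 1 1 ltac:(lia) ltac:(lia)); simpl in *; lra.
  - assert ((1 <= p ^ k)%nat) by (pose proof (Nat.pow_nonzero p k); lia).
    rewrite Nat.pow_succ_r', r_mul, IH, S_INR by lia; ring.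
Qed.

(* Halving an even or odd argument changes |r| by at most eta, so r grows
   at most linearly in the number of binary digits beyond a threshold. *)
Lemma r_log_growth (eta M : R) (N : nat) : 0 <= eta ->
  (forall j, (N <= j)%nat -> (1 <= j)%nat ->
     Rabs (INR (S j) * r (S j) - INR j * r j) <= eta * INR j) ->
  (forall n, (n <= 2 * N + 2)%nat -> Rabs (r n) <= M) ->
  forall k n, (1 <= n)%nat -> (n <= (2 * N + 2) * 2 ^ k)%nat ->
    Rabs (r n) <= M + eta * INR k.
Proof.
  intros Heta Hinc HM k; induction k as [|k IH]; intros n Hn1 Hn2.
  - simpl in Hn2 |- *; rewrite Rmult_0_r, Rplus_0_r; apply HM; lia.
  - rewrite S_INR.
    destruct (Compare_dec.le_lt_dec n (2 * N + 2)) as [HnK|HnK].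
    { pose proof (HM n HnK); pose proof (pos_INR k); nra. }
    rewrite Nat.pow_succ_r' in Hn2.
    pose proof (Nat.div_mod n 2 ltac:(lia)) as Hdm.
    pose proof (Nat.mod_upper_bound n 2 ltac:(lia)).
    set (m := (n / 2)%nat) in *.
    assert (Hm1 : (1 <= m)%nat) by lia.
    assert (Hrm : Rabs (r m) <= M + eta * INR k) by (apply IH; nia).
    assert (Hdouble : r (2 * m)%nat = r m) by (rewrite r_mul, r_two by lia; ring).
    destruct (n mod 2) as [|[|]] eqn:Hmod; [| |lia].
    + rewrite Hdm, Nat.add_0_r, Hdouble; lra.
    + rewrite Hdm, Nat.add_1_r.
      pose proof (Hinc (2 * m)%nat ltac:(lia) ltac:(lia)) as Hj.
      rewrite S_INR, Hdouble in Hj.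
      pose proof (weighted_step _ _ _ _ (lt_0_INR (2 * m) ltac:(lia)) Heta Hj); lra.
Qed.

Lemma additive_vanishes :
  small_increments (fun n => INR n * r n) -> forall p, (1 <= p)%nat -> r p = 0.
Proof.
  intros Hsmall p Hp.
  destruct (Req_dec (r p) 0) as [|Hne]; [assumption | exfalso].
  set (a := Rabs (r p)).
  assert (Ha : 0 < a) by (apply Rabs_pos_lt; exact Hne).
  assert (HpR : 0 < INR p) by (apply lt_0_INR; lia).
  (* with eta = a/(2p), the bound at p^k, which has about p k binary digits,
     gives k a <= M + k a / 2, impossible for large k *)
  set (eta := a / (2 * INR p)).
  assert (Heta : 0 < eta) by (unfold eta; apply Rdiv_lt_0_compat; lra).
  destruct (Hsmall eta Heta) as [N HN].
  destruct (finite_bound r (2 * N + 2)) as [M HM].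
  destruct (INR_archimed a (2 * M) Ha) as [k Hk].
  assert (Hpk1 : (1 <= p ^ k)%nat) by (pose proof (Nat.pow_nonzero p k); lia).
  assert (Hpk : (p ^ k <= (2 * N + 2) * 2 ^ (p * k))%nat).
  { assert (p ^ k <= 2 ^ (p * k))%nat.
    { rewrite Nat.pow_mul_r; apply Nat.pow_le_mono_l.
      apply Nat.lt_le_incl, Nat.pow_gt_lin_r; lia. }
    nia. }
  pose proof (r_log_growth eta M N (Rlt_le _ _ Heta) HN HM (p * k) (p ^ k) Hpk1 Hpk) as Hb.
  rewrite r_pow, Rabs_mult, Rabs_right, mult_INR in Hb by (auto; apply Rle_ge, pos_INR).
  fold a in Hb; unfold eta in Hb.
  replace (a / (2 * INR p) * (INR p * INR k)) with (INR k * a / 2) in Hb by (field; lra).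
  lra.
Qed.

End AdditiveVanishing.
Lemma ln_le_sub1 (x : R) : 0 < x -> ln x <= x - 1.
Proof. intros Hx; pose proof (exp_ineq1_le (ln x)); rewrite exp_ln in H; lra. Qed.

(* ln is sublinear: ln (x + 1) + 1 <= eps * x for all large x.  Writing
   x + 1 = s^2, this follows from ln (s^2) <= 2 (s - 1). *)
Lemma ln_sublinear (eps : R) : 0 < eps ->
  exists N : nat, forall x, INR N <= x -> ln (x + 1) + 1 <= eps * x.
Proof.
  intros Heps.
  set (T := 3 / eps + 1).
  assert (HT : 1 < T) by (unfold T; pose proof (Rdiv_lt_0_compat 3 eps ltac:(lra) Heps); lra).
  destruct (INR_archimed 1 (T * T) Rlt_0_1) as [N HN].
  exists N; intros x Hx.
  set (s := sqrt (x + 1)).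
  assert (Hss : s * s = x + 1) by (unfold s; apply sqrt_sqrt; nra).
  assert (HTs : T <= s).
  { unfold s; rewrite <- (sqrt_square T) by lra; apply sqrt_le_1_alt; nra. }
  assert (Hln : ln (x + 1) <= 2 * (s - 1)).
  { rewrite <- Hss, ln_mult by lra; pose proof (ln_le_sub1 s ltac:(lra)); lra. }
  assert (Hes : 3 <= eps * (s - 1)).
  { assert (eps * (3 / eps) = 3) by (field; lra); unfold T in HTs; nra. }
  nra.
Qed.

(* The increment of x ln x from x to x + 1 is ln (x + 1) + x ln (1 + 1/x),
   which lies between 0 and ln (x + 1) + 1. *)
Lemma xlnx_increment (x : R) : 1 <= x ->
  0 <= (x + 1) * ln (x + 1) - x * ln x <= ln (x + 1) + 1.
Proof.
  intros Hx.
  set (l := ln ((x + 1) / x)).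
  assert (Hsplit : ln (x + 1) = ln x + l).
  { unfold l; rewrite <- ln_mult by (try apply Rdiv_lt_0_compat; lra).
    f_equal; field; lra. }
  assert (Hl0 : 0 <= l).
  { unfold l; rewrite <- ln_1; left; apply ln_increasing; [lra|].
    apply (Rmult_lt_reg_r x); [lra|]; field_simplify; lra. }
  assert (Hl1 : x * l <= 1).
  { pose proof (ln_le_sub1 ((x + 1) / x) ltac:(apply Rdiv_lt_0_compat; lra)) as H.
    fold l in H; replace ((x + 1) / x - 1) with (/ x) in H by (field; lra).
    apply (Rmult_le_compat_l x) in H; [|lra]; rewrite Rinv_r in H; lra. }
  assert (Hlnx : 0 <= ln x).
  { rewrite <- ln_1; destruct (Req_dec x 1) as [->|Hne]; [lra|].
    left; apply ln_increasing; lra. }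
  rewrite Hsplit; nra.
Qed.

Lemma xlog2x_small_increments : small_increments (fun n => INR n * log2 (INR n)).
Proof.
  intros eta Heta.
  assert (Hln2 : 0 < ln 2) by (pose proof ln_lt_2; lra).
  destruct (ln_sublinear (eta * ln 2) ltac:(nra)) as [N HN].
  exists N; intros j Hj Hj1.
  assert (Hx : 1 <= INR j) by (apply (le_INR 1); lia).
  pose proof (xlnx_increment (INR j) Hx) as [Hlo Hhi].
  pose proof (HN (INR j) ltac:(apply le_INR; lia)).
  rewrite S_INR; unfold log2.
  replace ((INR j + 1) * (ln (INR j + 1) / ln 2) - INR j * (ln (INR j) / ln 2))
    with (((INR j + 1) * ln (INR j + 1) - INR j * ln (INR j)) / ln 2) by (field; lra).
  rewrite Rabs_right by (apply Rle_ge, Rmult_le_pos; [lra | left; apply Rinv_0_lt_compat; lra]).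
  apply (Rmult_le_reg_r (ln 2)); [lra|].
  unfold Rdiv; rewrite Rmult_assoc, Rinv_l by lra; lra.
Qed.
Definition Hhat_homogeneous (g : R -> R) : Prop :=
  forall (n : nat) (a : nat -> R) (c : R), in_dom n a -> 0 < c ->
    Hhat g n (fun i => c * a i) = c * Hhat g n a.

Definition Hhat_continuous (g : R -> R) : Prop :=
  forall (n : nat) (a : nat -> R), in_dom n a ->
    forall eps, 0 < eps -> exists delta, 0 < delta /\
      forall b : nat -> R, in_dom n b ->
        (forall i, (i < n)%nat -> Rabs (b i - a i) < delta) ->
        Rabs (Hhat g n b - Hhat g n a) < eps.

(* Only pairs (a, b) are needed: H-hat(a, b) = g a + g b - g (a + b). *)
Definition pair2 (a b : R) : nat -> R := fun i => match i with O => a | _ => b end.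

Lemma in_dom_pair2 (a b : R) : 0 <= a -> 0 <= b -> 0 < a + b -> in_dom 2 (pair2 a b).
Proof.
  intros Ha Hb Hab; split; simpl; [|lra].
  intros [|i] _; simpl; lra.
Qed.

Lemma Hhat_pair2 (g : R -> R) (a b : R) :
  Hhat g 2 (pair2 a b) = g a + g b - g (a + b).
Proof. unfold Hhat; simpl; rewrite !Rplus_0_l; reflexivity. Qed.

Lemma homogeneous_pair (g : R -> R) : Hhat_homogeneous g ->
  forall a b c, 0 <= a -> 0 <= b -> 0 < a + b -> 0 < c ->
    g (c * a) + g (c * b) - g (c * a + c * b) = c * (g a + g b - g (a + b)).
Proof.
  intros Hhom a b c Ha Hb Hab Hc.
  rewrite <- (Hhat_pair2 g a b), <- (Hhat_pair2 g (c * a) (c * b)).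
  rewrite <- (Hhom 2%nat _ c (in_dom_pair2 a b Ha Hb Hab) Hc).
  unfold Hhat; simpl; reflexivity.
Qed.

Lemma continuous_pair (g : R -> R) : Hhat_continuous g ->
  forall eps, 0 < eps -> exists delta, 0 < delta /\
    forall t, 0 <= t < delta -> Rabs ((g t - g (1 + t)) - (g 0 - g 1)) < eps.
Proof.
  intros Hcont eps Heps.
  destruct (Hcont 2%nat (pair2 1 0) (in_dom_pair2 1 0 ltac:(lra) ltac:(lra) ltac:(lra))
              eps Heps) as [delta [Hdelta Hclose]].
  exists delta; split; [exact Hdelta|]; intros t Ht.
  assert (Hdist : forall i, (i < 2)%nat -> Rabs (pair2 1 t i - pair2 1 0 i) < delta).
  { intros [|[|i]] Hi; simpl; [| |lia].
    - rewrite Rminus_diag, Rabs_R0; lra.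
    - rewrite Rminus_0_r, Rabs_right; lra. }
  specialize (Hclose _ (in_dom_pair2 1 t ltac:(lra) ltac:(lra) ltac:(lra)) Hdist).
  rewrite !Hhat_pair2, Rplus_0_r in Hclose.
  replace (g t - g (1 + t) - (g 0 - g 1)) with (g 1 + g t - g (1 + t) - (g 1 + g 0 - g 1))
    by ring; exact Hclose.
Qed.

Section FunctionalEquation.

Variable g : R -> R.
Hypothesis g_one : g 1 = 0.
Hypothesis g_half : g (1 / 2) = 1 / 2.
Hypothesis g_pair : forall a b c, 0 <= a -> 0 <= b -> 0 < a + b -> 0 < c ->
  g (c * a) + g (c * b) - g (c * a + c * b) = c * (g a + g b - g (a + b)).
Hypothesis g_cont : forall eps, 0 < eps -> exists delta, 0 < delta /\
  forall t, 0 <= t < delta -> Rabs ((g t - g (1 + t)) - (g 0 - g 1)) < eps.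

(* Take a = 1, b = 0, c = 2. *)
Lemma g_zero : g 0 = 0.
Proof.
  pose proof (g_pair 1 0 2 ltac:(lra) ltac:(lra) ltac:(lra) ltac:(lra)) as H.
  rewrite Rmult_0_r, !Rplus_0_r in H; lra.
Qed.

Lemma g_scale_nat (c : R) (n : nat) : 0 < c -> g (c * INR n) = c * g (INR n) + INR n * g c.
Proof.
  intros Hc; induction n as [|n IH].
  - simpl; rewrite Rmult_0_r, g_zero; ring.
  - rewrite S_INR; pose proof (pos_INR n) as Hn.
    pose proof (g_pair (INR n) 1 c ltac:(lra) ltac:(lra) ltac:(lra) Hc) as Hstep.
    rewrite Rmult_1_r, g_one in Hstep.
    replace (c * INR n + c) with (c * (INR n + 1)) in Hstep by ring; lra.
Qed.

(* The case c = 1/q, n = q of the scaling identity, using g 1 = 0. *)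
Lemma g_inv_nat (q : nat) : (1 <= q)%nat -> g (/ INR q) = - g (INR q) / (INR q * INR q).
Proof.
  intros Hq; assert (HqR : 0 < INR q) by (apply lt_0_INR; lia).
  pose proof (g_scale_nat (/ INR q) q ltac:(apply Rinv_0_lt_compat; lra)) as Hscale.
  rewrite Rinv_l, g_one in Hscale by lra.
  apply (Rmult_eq_reg_l (INR q)); [|lra].
  replace (INR q * (- g (INR q) / (INR q * INR q))) with (- (/ INR q * g (INR q)))
    by (field; lra).
  lra.
Qed.

Lemma g_ratio (p q : nat) : (1 <= q)%nat ->
  g (INR p / INR q) = g (INR p) / INR q - INR p * g (INR q) / (INR q * INR q).
Proof.
  intros Hq; assert (0 < INR q) by (apply lt_0_INR; lia).
  unfold Rdiv at 1; rewrite Rmult_comm, g_scale_nat, g_inv_nat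
    by (auto; apply Rinv_0_lt_compat; lra).
  field; lra.
Qed.

Lemma g_two : g 2 = -2.
Proof.
  pose proof (g_scale_nat (1 / 2) 2 ltac:(lra)) as H.
  replace (INR 2) with 2 in H by (simpl; ring).
  replace (1 / 2 * 2) with 1 in H by field; rewrite g_one, g_half in H; lra.
Qed.

(* Evaluating the continuity at t = 1/j gives the increments of g on the
   integers: g (1/j) - g (1 + 1/j) = (g j - g (j+1)) / j. *)
Lemma g_unit_shift (j : nat) : (1 <= j)%nat ->
  g (/ INR j) - g (1 + / INR j) = (g (INR j) - g (INR (S j))) / INR j.
Proof.
  intros Hj; assert (0 < INR j) by (apply lt_0_INR; lia).
  replace (1 + / INR j) with (/ INR j * INR (S j)) by (rewrite S_INR; field; lra).
  rewrite g_scale_nat, g_inv_nat, S_INR by (auto; apply Rinv_0_lt_compat; lra).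
  field; lra.
Qed.

Lemma g_small_increments : small_increments (fun n => g (INR n)).
Proof.
  intros eta Heta.
  destruct (g_cont eta Heta) as [delta [Hdelta Hclose]].
  destruct (archimed_cor1 delta Hdelta) as [N [HN HN0]].
  exists N; intros j Hj Hj1.
  assert (HNR : 0 < INR N) by (apply lt_0_INR; lia).
  assert (HjR : INR N <= INR j) by (apply le_INR; lia).
  assert (Hinv : 0 < / INR j <= / INR N) by
    (split; [apply Rinv_0_lt_compat | apply Rinv_le_contravar]; lra).
  specialize (Hclose (/ INR j) ltac:(lra)).
  rewrite g_zero, g_one, Rminus_diag, Rminus_0_r, g_unit_shift in Hclose by exact Hj1.
  replace (g (INR (S j)) - g (INR j)) with (- (INR j * ((g (INR j) - g (INR (S j))) / INR j)))
    by (field; lra).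
  rewrite Rabs_Ropp, Rabs_mult, Rabs_right by lra.
  rewrite Rmult_comm; apply Rmult_le_compat_r; lra.
Qed.

Definition log_defect (n : nat) : R := g (INR n) / INR n + log2 (INR n).

(* The scaling identity makes the defect completely additive. *)
Lemma log_defect_mul (m n : nat) : (1 <= m)%nat -> (1 <= n)%nat ->
  log_defect (m * n) = log_defect m + log_defect n.
Proof.
  intros Hm Hn; unfold log_defect, log2.
  assert (HmR : 0 < INR m) by (apply lt_0_INR; lia).
  assert (HnR : 0 < INR n) by (apply lt_0_INR; lia).
  pose proof ln_lt_2.
  rewrite mult_INR, g_scale_nat, ln_mult by lra.
  field; lra.
Qed.

Lemma log_defect_two : log_defect 2 = 0.
Proof.
  unfold log_defect, log2; replace (INR 2) with 2 by (simpl; ring).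
  rewrite g_two; pose proof ln_lt_2; field; lra.
Qed.

Lemma log_defect_small_increments : small_increments (fun n => INR n * log_defect n).
Proof.
  apply (small_increments_ext (fun n => g (INR n) + INR n * log2 (INR n))).
  - intros n Hn; unfold log_defect.
    assert (0 < INR n) by (apply lt_0_INR; lia); field; lra.
  - apply small_increments_plus; [exact g_small_increments | exact xlog2x_small_increments].
Qed.

Lemma g_nat (n : nat) : (1 <= n)%nat -> g (INR n) = - INR n * log2 (INR n).
Proof.
  intros Hn; assert (HnR : 0 < INR n) by (apply lt_0_INR; lia).
  pose proof (additive_vanishes log_defect log_defect_mul log_defect_two
                log_defect_small_increments n Hn) as Hdefect.
  unfold log_defect in Hdefect.
  apply (Rmult_eq_compat_l (INR n)) in Hdefect; field_simplify in Hdefect; lra.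
Qed.

End FunctionalEquation.

Theorem mainTheorem4 (g : R -> R)
  (hg1 : g 1 = 0)
  (hghalf : g (1/2) = 1/2)
  (hhom : forall (n : nat) (a : nat -> R) (c : R), in_dom n a -> 0 < c ->
            Hhat g n (fun i => c * a i) = c * Hhat g n a)
  (hcont : forall (n : nat) (a : nat -> R), in_dom n a ->
            forall eps, 0 < eps -> exists delta, 0 < delta /\
              forall b : nat -> R, in_dom n b ->
                (forall i, (i < n)%nat -> Rabs (b i - a i) < delta) ->
                Rabs (Hhat g n b - Hhat g n a) < eps) :
  forall p q : nat, (0 < p)%nat -> (0 < q)%nat ->
    let a := INR p / INR q in g a = a * log2 (1 / a).
Proof.
  intros p q hp hq a.
  pose proof (homogeneous_pair g hhom) as g_pair.
  pose proof (continuous_pair g hcont) as g_cont.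
  assert (HpR : 0 < INR p) by (apply lt_0_INR; lia).
  assert (HqR : 0 < INR q) by (apply lt_0_INR; lia).
  pose proof ln_lt_2.
  unfold a; rewrite (g_ratio g hg1 g_pair p q), !(g_nat g hg1 hghalf g_pair g_cont) by lia.
  replace (1 / (INR p / INR q)) with (INR q * / INR p) by (field; lra).
  unfold log2; rewrite ln_mult, ln_Rinv by (try apply Rinv_0_lt_compat; lra).
  field; lra.
Qed.
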